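(* Define $\beta=(\beta_n)_{n\ge0}$ by $\beta_n=1$ for $0\le n\le 3!=6$, and for each integer $k\ge3$: $\beta_n=\frac1{k!}$ for $k!<n\le(k+1)!-2$ and for $n=(k+1)!$, and $\beta_n=\frac1{(k+1)!}$ for $n=(k+1)!-1$. Then for every $a\in(0,1)$, the map $T_a$ does not induce a bounded composition operator on $H^2(\beta)$.
   Context: $H^2(\beta)$ is the Hilbert space of analytic functions $f(z)=\sum_{n\ge0}a_nz^n$ on the unit disk $\mathbb D$ with $\|f\|^2=\sum_{n\ge0}|a_n|^2\beta_n<\infty$. $T_a(z)=\frac{a+z}{1+\bar a z}$ and $C_{T_a}f=f\circ T_a$. *)

From Stdlib Require Import Reals Arith Factorial.
From Coquelicot Require Import Coquelicot.
Open Scope R_scope.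

Definition beta_spec (beta : nat -> R) : Prop :=
  (forall n : nat, (n <= 6)%nat -> beta n = 1) /\
  (forall k n : nat, (3 <= k)%nat ->
      ((fact k < n)%nat /\ (n <= fact (k + 1) - 2)%nat \/ n = fact (k + 1)) ->
      beta n = / INR (fact k)) /\
  (forall k : nat, (3 <= k)%nat ->
      beta (fact (k + 1) - 1)%nat = / INR (fact (k + 1))).

(* f = sum a_n z^n belongs to H^2(beta) *)
Definition in_H2 (beta : nat -> R) (a : nat -> C) : Prop :=
  ex_series (fun n => (Cmod (a n))^2 * beta n).

Definition H2norm2 (beta : nat -> R) (a : nat -> C) : R :=
  Series (fun n => (Cmod (a n))^2 * beta n).

Definition Tmob (a : C) (z : C) : C :=
  Cdiv (Cplus a z) (Cplus (RtoC 1) (Cmult (Cconj a) z)).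

Definition bounded_comp_op (beta : nat -> R) (a : C) : Prop :=
  exists M : R, forall f : nat -> C, in_H2 beta f ->
    exists g : nat -> C, in_H2 beta g /\
      H2norm2 beta g <= M * H2norm2 beta f /\
      forall z : C, Cmod z < 1 ->
        exists l : C, is_pseries f (Tmob a z) l /\ is_pseries g z l.

From Stdlib Require Import Reals Arith Factorial Lia Lra Psatz.
From Coquelicot Require Import Coquelicot.
Open Scope R_scope.

(* Write K_x(n) = sum_{j <= n} x^j / beta_j for the partial sums of the squared
   norm of the reproducing kernel at sqrt x.  Testing a bounded C_{T_a} on
   truncated kernels at rho = T_a(r), whose norm and value at rho coincide, and
   evaluating the image at r by Cauchy-Schwarz gives K_{T_a(r)^2}(n) <= K sup_m
   K_{r^2}(m) for a fixed K (kernel_comparison).  Now take k large, N = (k+1)!,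
   L = ln(k+1), r = exp(-L/(2N)).  As 1/beta_j <= k! below N and 1/beta_j <= j+1
   everywhere, K_{r^2} = O(N^2/(k+1)) (kernel_sum_upper).  But beta_j = 1/N on
   (N, 2N] and 1 - T_a(r) <= (1-a)(1-r), so the window (N, N + N/q] with q a >= 2
   yields K_{T_a(r)^2} >= N^2 (k+1)^(a/4 - 1) / (2q) (kernel_sum_lower).  Hence
   (k+1)^(a/4) <= 14 q K for every large k (growth_bound), which is absurd. *)

Lemma sum_n_le_R (u v : nat -> R) (n : nat) :
  (forall j, u j <= v j) -> sum_n u n <= sum_n v n.
Proof. exact (sum_n_m_le u v 0 n). Qed.

Lemma sum_n_Rplus (u v : nat -> R) (n : nat) :
  sum_n (fun j => u j + v j) n = sum_n u n + sum_n v n.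
Proof. exact (sum_n_plus u v n). Qed.

Lemma sum_n_Rscal (c : R) (u : nat -> R) (n : nat) :
  sum_n (fun j => c * u j) n = c * sum_n u n.
Proof. exact (sum_n_mult_l c u n). Qed.

Lemma sum_n_nonneg (u : nat -> R) (n : nat) :
  (forall j, 0 <= u j) -> 0 <= sum_n u n.
Proof.
intros Hu; induction n as [|n IH]; [rewrite sum_O; apply Hu|].
rewrite sum_Sn; specialize (Hu (S n)); change (plus ?x ?y) with (x + y); lra.
Qed.

Lemma sum_n_le_Series (u : nat -> R) (n : nat) :
  (forall j, 0 <= u j) -> ex_series u -> sum_n u n <= Series u.
Proof.
intros Hu Hex. apply is_lim_seq_incr_compare; [apply Series_correct, Hex|].
intros m; rewrite sum_Sn; specialize (Hu (S m)); change (plus ?x ?y) with (x + y); lra.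
Qed.

Lemma is_series_finite {K : AbsRing} {V : NormedModule K} (u : nat -> V) (n : nat) :
  (forall m, (n < m)%nat -> u m = zero) -> is_series u (sum_n u n).
Proof.
intros Hu.
assert (Hstat : forall d, sum_n u (n + d) = sum_n u n).
{ induction d as [|d IH]; [now rewrite Nat.add_0_r|].
  rewrite Nat.add_succ_r, sum_Sn, IH, (Hu (S (n + d))) by lia. apply plus_zero_r. }
apply filterlim_ext_loc with (fun _ => sum_n u n); [|apply filterlim_const].
exists n; intros m Hm. replace m with (n + (m - n))%nat by lia. now rewrite Hstat.
Qed.

Lemma geom_tail_sum (y : R) (m n : nat) : y <> 1 ->
  sum_n (fun j => if (m <=? j)%nat then y ^ (j - m) else 0) n
  = (1 - y ^ (n + 1 - m)) / (1 - y).
Proof.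
intros Hy. assert (Hy' : 1 - y <> 0) by lra.
induction n as [|n IH].
- rewrite sum_O. destruct m as [|m]; simpl; [field; lra|].
  replace (1 - S m)%nat with 0%nat by lia; simpl; field; lra.
- rewrite sum_Sn, IH; change (plus ?x ?y) with (x + y).
  destruct (m <=? S n)%nat eqn:Hm.
  + apply Nat.leb_le in Hm. replace (S n + 1 - m)%nat with (S (n + 1 - m)) by lia.
    replace (S n - m)%nat with (n + 1 - m)%nat by lia. simpl; field; lra.
  + apply Nat.leb_gt in Hm. replace (S n + 1 - m)%nat with 0%nat by lia.
    replace (n + 1 - m)%nat with 0%nat by lia. simpl; field; lra.
Qed.

Lemma geom_tail_le (y : R) (m n : nat) : 0 <= y < 1 ->
  sum_n (fun j => if (m <=? j)%nat then y ^ (j - m) else 0) n <= / (1 - y).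
Proof.
intros Hy. rewrite geom_tail_sum by lra. unfold Rdiv.
assert (0 <= y ^ (n + 1 - m)) by (apply pow_le; lra).
assert (0 < / (1 - y)) by (apply Rinv_0_lt_compat; lra). nra.
Qed.

Lemma Cmod_pow_n (x : C) (n : nat) : Cmod (pow_n x n) = Cmod x ^ n.
Proof.
induction n as [|n IH]; simpl; [apply Cmod_1|].
change (mult x (pow_n x n)) with (Cmult x (pow_n x n)). rewrite Cmod_mult, IH. reflexivity.
Qed.

Lemma pow_n_RtoC (y : R) (j : nat) : pow_n (RtoC y) j = RtoC (y ^ j).
Proof.
induction j as [|j IH]; [reflexivity|]. simpl; rewrite IH.
change (mult (RtoC y) (RtoC (y ^ j))) with (Cmult (RtoC y) (RtoC (y ^ j))).
now rewrite RtoC_mult.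
Qed.

Lemma sum_n_RtoC (u : nat -> R) (n : nat) :
  sum_n (fun j => RtoC (u j)) n = RtoC (sum_n u n).
Proof.
induction n as [|n IH]; [now rewrite !sum_O|].
rewrite !sum_Sn, IH. change (plus (RtoC ?x) (RtoC ?y)) with (Cplus (RtoC x) (RtoC y)).
now rewrite RtoC_plus.
Qed.

Lemma exp_pow (y : R) (n : nat) : exp y ^ n = exp (INR n * y).
Proof.
induction n as [|n IH]; [simpl; rewrite Rmult_0_l, exp_0; reflexivity|].
rewrite S_INR; simpl; rewrite IH, <- exp_plus. f_equal; ring.
Qed.

Lemma exp_mono (x y : R) : x <= y -> exp x <= exp y.
Proof. intros [H|H]; [left; apply exp_increasing, H|right; rewrite H; reflexivity]. Qed.

Lemma one_minus_exp_ge (v : R) : 0 < v <= 1 -> v / 2 <= 1 - exp (- v).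
Proof.
intros Hv. rewrite exp_Ropp. pose proof (exp_ineq1_le v).
assert (/ exp v <= / (1 + v)) by (apply Rinv_le_contravar; lra).
assert (v / 2 <= v / (1 + v)) by (apply Rmult_le_compat_l; [lra|apply Rinv_le_contravar; lra]).
replace (v / (1 + v)) with (1 - / (1 + v)) in * by (field; lra). lra.
Qed.

Lemma ln_le_pred (y : R) : 0 < y -> ln y <= y - 1.
Proof.
intros Hy. rewrite <- (ln_exp (y - 1)). apply ln_le; [exact Hy|].
pose proof (exp_ineq1_le (y - 1)). lra.
Qed.

Lemma pow_antimono (y : R) (m n : nat) : 0 <= y <= 1 -> (m <= n)%nat -> y ^ n <= y ^ m.
Proof.
intros Hy Hmn. replace n with (m + (n - m))%nat by lia. rewrite pow_add.
assert (y ^ (n - m) <= 1) by (rewrite <- (pow1 (n - m)); apply pow_incr; lra).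
assert (0 <= y ^ m) by (apply pow_le; lra).
assert (0 <= y ^ (n - m)) by (apply pow_le; lra). nra.
Qed.

Lemma pow_ge_exp (y u : R) (m : nat) : 0 <= u < 1 -> 1 - u <= y ->
  exp (- (INR m * (u / (1 - u)))) <= y ^ m.
Proof.
intros Hu Hy.
assert (Hexp : exp (- (u / (1 - u))) <= 1 - u).
{ rewrite exp_Ropp. pose proof (exp_ineq1_le (u / (1 - u))) as Hlin.
  replace (1 - u) with (/ (1 + u / (1 - u))) at 2 by (field; lra).
  apply Rinv_le_contravar; [|exact Hlin].
  assert (0 <= u / (1 - u)) by (apply Rdiv_le_0_compat; lra). lra. }
replace (- (INR m * (u / (1 - u)))) with (INR m * - (u / (1 - u))) by ring.
rewrite <- exp_pow. apply pow_incr. split; [apply Rlt_le, exp_pos|lra].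
Qed.

Lemma amgm_weighted (c y b t : R) : 0 < b -> 0 < t ->
  c * y <= (t * (c ^ 2 * b) + y ^ 2 / b / t) / 2.
Proof.
intros Hb Ht.
assert (E : (t * (c ^ 2 * b) + y ^ 2 / b / t) / 2 - c * y = (t * c * b - y) ^ 2 / (2 * b * t))
  by (field; lra).
assert (0 <= (t * c * b - y) ^ 2 / (2 * b * t)) by (apply Rdiv_le_0_compat; [apply pow2_ge_0|nra]).
lra.
Qed.

Lemma le_fact (n : nat) : (n <= fact n)%nat.
Proof.
induction n as [|n IH]; [simpl; lia|].
change (fact (S n)) with (S n * fact n)%nat. pose proof (lt_O_fact n). nia.
Qed.

Lemma INR_fact_pos (n : nat) : 0 < INR (fact n).
Proof. apply lt_0_INR, lt_O_fact. Qed.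

Lemma fact_succ_mult (k : nat) : INR (fact (k + 1)) = (INR k + 1) * INR (fact k).
Proof. replace (k + 1)%nat with (S k) by lia. simpl fact. rewrite plus_INR, mult_INR. ring. Qed.

Lemma fact_bracket (d : nat) :
  exists k, (3 <= k)%nat /\ (fact k < 7 + d <= fact (k + 1))%nat.
Proof.
induction d as [|d [k [Hk [Hlo Hhi]]]]; [exists 3%nat; simpl; lia|].
destruct (Nat.eq_dec (7 + d) (fact (k + 1))) as [E|E]; [|exists k; lia].
exists (k + 1)%nat. split; [lia|]. split; [lia|].
replace (k + 1 + 1)%nat with (S (k + 1)) by lia.
change (fact (S (k + 1))) with (S (k + 1) * fact (k + 1))%nat. nia.
Qed.

Section Weight.
Variable beta : nat -> R.
Hypothesis hbeta : beta_spec beta.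

Lemma beta_cases (j : nat) :
  ((j <= 6)%nat /\ beta j = 1) \/
  exists k, (3 <= k /\ fact k < j <= fact (k + 1))%nat /\
   ((j = fact (k + 1) - 1)%nat /\ beta j = / INR (fact (k + 1)) \/
    (j <> fact (k + 1) - 1)%nat /\ beta j = / INR (fact k)).
Proof.
destruct hbeta as [B1 [B2 B3]].
destruct (le_lt_dec j 6) as [Hj|Hj]; [left; auto|right].
destruct (fact_bracket (j - 7)) as [k [Hk Hb]].
replace (7 + (j - 7))%nat with j in Hb by lia.
exists k. split; [lia|].
destruct (Nat.eq_dec j (fact (k + 1) - 1)) as [E|E].
- left. split; auto. subst j. apply B3; lia.
- right. split; auto. apply (B2 k j); lia.
Qed.

Lemma beta_pos (j : nat) : 0 < beta j.
Proof.
destruct (beta_cases j) as [[_ E]|[k [_ [[_ E]|[_ E]]]]]; rewrite E;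
  try lra; apply Rinv_0_lt_compat, INR_fact_pos.
Qed.

Lemma inv_beta_le_succ (j : nat) : / beta j <= INR j + 1.
Proof.
rewrite <- S_INR.
destruct (beta_cases j) as [[_ E]|[k [Hk [[Ej E]|[_ E]]]]]; rewrite E.
- rewrite Rinv_1. apply (le_INR 1); lia.
- rewrite Rinv_inv. apply le_INR. pose proof (lt_O_fact (k + 1)). lia.
- rewrite Rinv_inv. apply le_INR. lia.
Qed.

Lemma inv_beta_le_fact (k j : nat) : (3 <= k)%nat ->
  (j <= fact (k + 1))%nat -> j <> (fact (k + 1) - 1)%nat -> / beta j <= INR (fact k).
Proof.
intros Hk Hj Hne.
destruct (beta_cases j) as [[_ E]|[k' [Hk' Hcase]]];
  [rewrite E, Rinv_1; apply (le_INR 1), lt_O_fact|].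
assert (Hkk : (k' <= k)%nat).
{ destruct (le_lt_dec k' k) as [h|h]; [exact h|].
  pose proof (fact_le (k + 1) k' ltac:(lia)). lia. }
destruct Hcase as [[Ej E]|[_ E]]; rewrite E, Rinv_inv; apply le_INR, fact_le; [|exact Hkk].
destruct (Nat.eq_dec k' k); [subst; lia|lia].
Qed.

Lemma beta_plateau (k j : nat) : (3 <= k)%nat ->
  (fact (k + 1) < j <= 2 * fact (k + 1))%nat -> beta j = / INR (fact (k + 1)).
Proof.
destruct hbeta as [_ [B2 _]]. intros Hk Hj.
apply (B2 (k + 1)%nat j); [lia|left; split; [lia|]].
replace (k + 1 + 1)%nat with (S (S k)) by lia.
replace (k + 1)%nat with (S k) in * by lia.
change (fact (S (S k))) with (S (S k) * fact (S k))%nat.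
pose proof (lt_O_fact (S k)). nia.
Qed.

End Weight.

(* Partial sums of sum_j x^j / beta_j; for x = r^2 this is the squared norm of
   the reproducing kernel of H^2(beta) at r, truncated at degree n. *)
Definition kernel_sum (beta : nat -> R) (x : R) (n : nat) : R :=
  sum_n (fun j => x ^ j / beta j) n.

Lemma tail_term_bound (N i : nat) (x : R) : (1 <= N)%nat -> 0 <= x ->
  (INR (N - 1 + i) + 1) * x ^ (N - 1 + i)
  <= INR N * x ^ (N - 1) * (x * (1 + / INR N)) ^ i.
Proof.
intros HN Hx. assert (HNr : 1 <= INR N) by (apply (le_INR 1); lia).
assert (Hlin : INR (N - 1 + i) + 1 <= INR N * (1 + / INR N) ^ i).
{ rewrite plus_INR, minus_INR by lia.
  pose proof (Rle_pow_lin (/ INR N) i ltac:(apply Rlt_le, Rinv_0_lt_compat; lra)).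
  replace (INR N - INR 1 + INR i + 1) with (INR N * (1 + INR i * / INR N)) by (simpl; field; lra).
  apply Rmult_le_compat_l; lra. }
rewrite pow_add, Rpow_mult_distr.
assert (0 <= x ^ (N - 1) * x ^ i) by (apply Rmult_le_pos; apply pow_le; lra).
nra.
Qed.

Section KernelUpper.
Variable beta : nat -> R.
Hypothesis hbeta : beta_spec beta.
Variable k : nat.
Hypothesis hk : (3 <= k)%nat.
Let N := fact (k + 1).

(* Termwise: below N - 1 use 1/beta_j <= k!, from N - 1 on use 1/beta_j <= j + 1. *)
Lemma kernel_term_bound (x : R) (j : nat) : 0 <= x ->
  x ^ j / beta j <= INR (fact k) * x ^ j
    + INR N * x ^ (N - 1)
      * (if (N - 1 <=? j)%nat then (x * (1 + / INR N)) ^ (j - (N - 1)) else 0).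
Proof.
intros Hx. pose proof (beta_pos beta hbeta j) as Bj.
assert (HN : (1 <= N)%nat) by apply lt_O_fact.
assert (Hxj : 0 <= x ^ j) by (apply pow_le; lra).
assert (HfxPos : 0 <= INR (fact k) * x ^ j) by (apply Rmult_le_pos; [apply pos_INR|lra]).
unfold Rdiv; rewrite Rmult_comm.
destruct (N - 1 <=? j)%nat eqn:Hj.
- apply Nat.leb_le in Hj.
  pose proof (tail_term_bound N (j - (N - 1)) x HN Hx) as Htail.
  replace (N - 1 + (j - (N - 1)))%nat with j in Htail by lia.
  pose proof (inv_beta_le_succ beta hbeta j).
  assert (/ beta j * x ^ j <= (INR j + 1) * x ^ j) by (apply Rmult_le_compat_r; lra).
  lra.
- apply Nat.leb_gt in Hj.
  unfold N in Hj.
  pose proof (inv_beta_le_fact beta hbeta k j hk ltac:(lia) ltac:(lia)).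
  assert (/ beta j * x ^ j <= INR (fact k) * x ^ j) by (apply Rmult_le_compat_r; lra).
  rewrite Rmult_0_r. lra.
Qed.

Lemma kernel_sum_bound (x : R) (n : nat) : 0 <= x < 1 ->
  x * (1 + / INR N) < 1 ->
  kernel_sum beta x n
  <= INR (fact k) / (1 - x) + INR N * x ^ (N - 1) / (1 - x * (1 + / INR N)).
Proof.
intros Hx Hz. set (z := x * (1 + / INR N)).
assert (Hz0 : 0 <= z).
{ unfold z. assert (0 < / INR N) by (apply Rinv_0_lt_compat, INR_fact_pos). nra. }
eapply Rle_trans; [apply sum_n_le_R; intros j; apply (kernel_term_bound x j), Hx|].
rewrite sum_n_Rplus, !sum_n_Rscal.
assert (Hgeom : sum_n (fun j => x ^ j) n <= / (1 - x)).
{ eapply Rle_trans; [|apply (geom_tail_le x 0 n Hx)].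
  apply sum_n_le_R; intros j; rewrite Nat.sub_0_r; simpl; lra. }
pose proof (geom_tail_le z (N - 1) n ltac:(unfold z in *; lra)).
assert (0 <= INR N * x ^ (N - 1)) by (apply Rmult_le_pos; [apply pos_INR|apply pow_le; lra]).
pose proof (pos_INR (fact k)).
unfold Rdiv. apply Rplus_le_compat; apply Rmult_le_compat_l; auto.
Qed.

End KernelUpper.

Lemma log_scale_bounds (k : nat) : (8 <= k)%nat ->
  2 <= ln (INR k + 1) <= INR k.
Proof.
intros Hk. assert (Hkr : 8 <= INR k) by (apply (le_INR 8) in Hk; simpl in Hk; lra).
split.
- rewrite <- (ln_exp 2). apply ln_le; [apply exp_pos|].
  replace 2 with (1 + 1) by ring. rewrite exp_plus.
  pose proof exp_le_3. pose proof (exp_pos 1). nra.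
- pose proof (ln_le_pred (INR k + 1)). lra.
Qed.

Lemma exp_scale_gaps (L Nr : R) : 2 <= L <= Nr ->
  L / (2 * Nr) <= 1 - exp (- (L / Nr)) /\
  L / (4 * Nr) <= 1 - exp (- (L / Nr)) * (1 + / Nr).
Proof.
intros HL. assert (HNr : 0 < Nr) by lra.
split.
- replace (L / (2 * Nr)) with (L / Nr / 2) by (field; lra).
  apply one_minus_exp_ge. split; [apply Rdiv_lt_0_compat; lra|].
  apply Rmult_le_reg_r with Nr; [lra|]. unfold Rdiv; rewrite Rmult_assoc, Rinv_l; lra.
- set (v := (L - 1) / Nr).
  assert (Hv : 0 < v <= 1).
  { unfold v. split; [apply Rdiv_lt_0_compat; lra|].
    apply Rmult_le_reg_r with Nr; [lra|]. unfold Rdiv; rewrite Rmult_assoc, Rinv_l; lra. }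
  assert (exp (- (L / Nr)) * (1 + / Nr) <= exp (- v)).
  { replace (- v) with (- (L / Nr) + / Nr) by (unfold v; field; lra). rewrite exp_plus.
    apply Rmult_le_compat_l; [apply Rlt_le, exp_pos|apply exp_ineq1_le]. }
  pose proof (one_minus_exp_ge v Hv).
  assert (L / (4 * Nr) <= v / 2).
  { unfold v. apply Rmult_le_reg_r with (4 * Nr); [lra|]. field_simplify; lra. }
  lra.
Qed.

Lemma exp_scale_pow_pred (L : R) (N : nat) : (1 <= N)%nat -> 0 <= L <= INR N / 3 ->
  exp (- (L / INR N)) ^ (N - 1) <= 3 * exp (- L).
Proof.
intros HN HL. assert (HNr : 1 <= INR N) by (apply (le_INR 1); lia).
set (x := exp (- (L / INR N))).
assert (HxN : x ^ (N - 1) * x = exp (- L)).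
{ rewrite Rmult_comm, tech_pow_Rmult. replace (S (N - 1)) with N by lia.
  unfold x. rewrite exp_pow. f_equal. field; lra. }
assert (Hx3 : / 3 <= x).
{ assert (L / INR N <= / 3).
  { apply Rmult_le_reg_r with (INR N); [lra|]. unfold Rdiv; rewrite Rmult_assoc, Rinv_l; lra. }
  pose proof (exp_ineq1_le (- (L / INR N))) as Hexp. fold x in Hexp. lra. }
assert (0 <= x ^ (N - 1)) by (apply pow_le; unfold x; apply Rlt_le, exp_pos).
pose proof (exp_pos (- L)). nra.
Qed.

Definition mobius (a r : R) : R := (a + r) / (1 + a * r).

Lemma Tmob_real (a r : R) : 1 + a * r <> 0 -> Tmob (RtoC a) (RtoC r) = RtoC (mobius a r).
Proof.
intros H. unfold Tmob, mobius, Cdiv, Cplus, Cmult, Cinv, Cconj, RtoC; simpl.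
f_equal; field; intro E; apply H; nra.
Qed.

Lemma mobius_gap (a r : R) : 0 <= a < 1 -> 0 <= r <= 1 ->
  1 - (1 - a) * (1 - r) <= mobius a r.
Proof.
intros Ha Hr. unfold mobius. assert (Hd : 0 < 1 + a * r) by nra.
apply Rmult_le_reg_r with (1 + a * r); [exact Hd|].
unfold Rdiv; rewrite Rmult_assoc, Rinv_l by lra.
assert (0 <= a * r * ((1 - a) * (1 - r))) by (apply Rmult_le_pos; apply Rmult_le_pos; lra).
nra.
Qed.

Lemma mobius_unit (a r : R) : 0 <= a <= 1 -> 0 <= r <= 1 -> 0 <= mobius a r <= 1.
Proof.
intros Ha Hr. unfold mobius. assert (Hd : 0 < 1 + a * r) by nra. split.
- apply Rdiv_le_0_compat; lra.
- apply Rmult_le_reg_r with (1 + a * r); [exact Hd|].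
  unfold Rdiv; rewrite Rmult_assoc, Rinv_l by lra. nra.
Qed.

(* Powers of T_a(exp(-s)) decay roughly at rate (1-a)s instead of s. *)
Lemma mobius_pow_lower (a s : R) (m : nat) : 0 <= a < 1 -> 0 <= s -> (1 - a) * s < 1 ->
  exp (- (INR m * ((1 - a) * s / (1 - (1 - a) * s)))) <= mobius a (exp (- s)) ^ m.
Proof.
intros Ha Hs Hs1. apply pow_ge_exp; [split; [nra|lra]|].
assert (Hr : 0 < exp (- s) <= 1).
{ split; [apply exp_pos|]. rewrite <- exp_0.
  destruct (Req_dec s 0) as [->|]; [rewrite Ropp_0; lra|left; apply exp_increasing; lra]. }
pose proof (exp_ineq1_le (- s)).
pose proof (mobius_gap a (exp (- s)) Ha ltac:(lra)). nra.
Qed.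

(* Point evaluation at r is controlled by the kernel sums at r^2: a
   Cauchy-Schwarz inequality, written in AM-GM form with a free parameter t. *)
Lemma evaluation_bound (beta : nat -> R) (g : nat -> C) (r E t : R) (l : C) :
  (forall j, 0 < beta j) -> in_H2 beta g -> 0 <= r -> 0 < t ->
  (forall n, kernel_sum beta (r ^ 2) n <= E) -> is_pseries g (RtoC r) l ->
  Cmod l <= (t * H2norm2 beta g + E / t) / 2.
Proof.
intros Bpos Hg Hr Ht HE Hl.
set (A := H2norm2 beta g).
assert (HA : forall n, sum_n (fun j => Cmod (g j) ^ 2 * beta j) n <= A).
{ intros n. apply sum_n_le_Series; [|exact Hg].
  intros j; apply Rmult_le_pos; [apply pow2_ge_0|apply Rlt_le, Bpos]. }
assert (Hpartial : forall n,
  Cmod (sum_n (fun j => scal (pow_n (RtoC r) j) (g j)) n) <= (t * A + E / t) / 2).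
{ intros n. eapply Rle_trans; [apply (norm_sum_n_m (K := C_AbsRing) (V := C_NormedModule))|].
  change norm with Cmod.
  eapply Rle_trans; [apply (sum_n_le_R _
    (fun j => / 2 * t * (Cmod (g j) ^ 2 * beta j) + / 2 * / t * ((r ^ 2) ^ j / beta j)))|].
  - intros j. change (scal (pow_n (RtoC r) j) (g j)) with (Cmult (pow_n (RtoC r) j) (g j)).
    rewrite Cmod_mult, Cmod_pow_n, Cmod_R, (Rabs_pos_eq r Hr), Rmult_comm.
    eapply Rle_trans; [apply (amgm_weighted _ _ (beta j) t (Bpos j) Ht)|].
    rewrite <- !pow_mult, Nat.mul_comm. right. pose proof (Bpos j). field; split; lra.
  - rewrite sum_n_Rplus, !sum_n_Rscal.
    specialize (HA n); specialize (HE n); unfold kernel_sum in HE.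
    assert (Ht' : 0 < / t) by (apply Rinv_0_lt_compat; lra).
    pose proof (Rmult_le_compat_l t _ _ (Rlt_le _ _ Ht) HA).
    pose proof (Rmult_le_compat_l (/ t) _ _ (Rlt_le _ _ Ht') HE). unfold Rdiv; lra. }
assert (Hlim : is_lim_seq
  (fun n => Cmod (sum_n (fun j => scal (pow_n (RtoC r) j) (g j)) n)) (Cmod l)).
{ eapply filterlim_comp; [exact Hl|].
  apply (filterlim_norm (K := C_AbsRing) (V := C_NormedModule)). }
exact (is_lim_seq_le _ _ (Cmod l) _ Hpartial Hlim (is_lim_seq_const _)).
Qed.

Definition trunc_terms (beta : nat -> R) (x : R) (n j : nat) : R :=
  if (j <=? n)%nat then x ^ j / beta j else 0.

Lemma trunc_terms_sum (beta : nat -> R) (x : R) (n : nat) :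
  sum_n (trunc_terms beta x n) n = kernel_sum beta x n.
Proof.
apply sum_n_ext_loc. intros j Hj. unfold trunc_terms.
now replace (j <=? n)%nat with true by (symmetry; apply Nat.leb_le; lia).
Qed.

Lemma trunc_terms_vanish (beta : nat -> R) (x : R) (n m : nat) :
  (n < m)%nat -> trunc_terms beta x n m = 0.
Proof.
intros Hm. unfold trunc_terms.
now replace (m <=? n)%nat with false by (symmetry; apply Nat.leb_gt; lia).
Qed.

Lemma trunc_terms_series (beta : nat -> R) (x : R) (n : nat) :
  is_series (trunc_terms beta x n) (kernel_sum beta x n).
Proof.
rewrite <- trunc_terms_sum.
apply (is_series_finite (K := R_AbsRing) (V := R_NormedModule)), trunc_terms_vanish.
Qed.

Lemma trunc_terms_series_C (beta : nat -> R) (x : R) (n : nat) :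
  is_series (fun j => RtoC (trunc_terms beta x n j)) (RtoC (kernel_sum beta x n)).
Proof.
rewrite <- trunc_terms_sum, <- sum_n_RtoC.
apply (is_series_finite (K := C_AbsRing) (V := C_NormedModule)).
intros m Hm. now rewrite trunc_terms_vanish.
Qed.

Definition trunc_kernel (beta : nat -> R) (y : R) (n : nat) (j : nat) : C :=
  if (j <=? n)%nat then RtoC (y ^ j / beta j) else RtoC 0.

Lemma trunc_kernel_norm (beta : nat -> R) (y : R) (n : nat) : (forall j, 0 < beta j) ->
  is_series (fun j => Cmod (trunc_kernel beta y n j) ^ 2 * beta j) (kernel_sum beta (y ^ 2) n).
Proof.
intros Bpos.
set (u := trunc_terms beta (y ^ 2) n).
apply is_series_ext with u.
- intros j. change (u j = Cmod (trunc_kernel beta y n j) ^ 2 * beta j).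
  pose proof (Bpos j). unfold u, trunc_terms, trunc_kernel.
  destruct (j <=? n)%nat; rewrite Cmod_R, pow2_abs; [|ring].
  rewrite <- pow_mult, Nat.mul_comm, pow_mult. field. lra.
- apply trunc_terms_series.
Qed.

Lemma trunc_kernel_value (beta : nat -> R) (y : R) (n : nat) :
  is_pseries (trunc_kernel beta y n) (RtoC y) (RtoC (kernel_sum beta (y ^ 2) n)).
Proof.
set (u := trunc_terms beta (y ^ 2) n).
apply is_series_ext with (fun j => RtoC (u j)).
- intros j. change (RtoC (u j) = Cmult (pow_n (RtoC y) j) (trunc_kernel beta y n j)).
  rewrite pow_n_RtoC. unfold u, trunc_terms, trunc_kernel.
  destruct (j <=? n)%nat; rewrite <- RtoC_mult; f_equal; [|ring].
  rewrite <- pow_mult, Nat.mul_comm, pow_mult. unfold Rdiv; ring.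
- apply trunc_terms_series_C.
Qed.

Definition kernel_domination (beta : nat -> R) (a K : R) : Prop :=
  forall (r E : R) (n : nat), 0 <= r < 1 ->
    (forall m, kernel_sum beta (r ^ 2) m <= E) ->
    kernel_sum beta (mobius a r ^ 2) n <= K * E.

(* A bounded C_{T_a} yields kernel domination: test it on the truncated kernel
   k at rho = T_a(r), for which ||k||^2 = k(rho) = (C_{T_a} k)(r). *)
Lemma kernel_comparison (beta : nat -> R) (a : R) : (forall j, 0 < beta j) -> 0 <= a ->
  bounded_comp_op beta (RtoC a) ->
  exists K, 0 < K /\ kernel_domination beta a K.
Proof.
intros Bpos Ha [M HM]. set (K := Rabs M + 1).
assert (HK : 0 < K) by (unfold K; pose proof (Rabs_pos M); lra).
exists K. split; [exact HK|]. intros r E n Hr HE.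
set (rho := mobius a r). set (V := kernel_sum beta (rho ^ 2) n).
pose proof (trunc_kernel_norm beta rho n Bpos) as Hnorm.
destruct (HM _ (ex_intro _ _ Hnorm)) as [g [Hg [Hle Hcomp]]].
destruct (Hcomp (RtoC r)) as [l [Hl1 Hl2]]; [rewrite Cmod_R, Rabs_pos_eq; lra|].
rewrite Tmob_real in Hl1 by nra. fold rho in Hl1.
assert (El : l = RtoC V).
{ exact (filterlim_locally_unique (K := C_AbsRing) (V := C_NormedModule) (F := eventually)
    _ _ _ Hl1 (trunc_kernel_value beta rho n)). }
assert (HV : 0 <= V).
{ apply sum_n_nonneg. intros j. apply Rdiv_le_0_compat; [apply pow_le, pow2_ge_0|apply Bpos]. }
rewrite El in Hl2.
(* Evaluation at r with t = 1/K, together with ||g||^2 <= M V <= K V, gives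
   V <= (V + K E) / 2. *)
pose proof (evaluation_bound beta g r E (/ K) (RtoC V) Bpos Hg (proj1 Hr)
  (Rinv_0_lt_compat _ HK) HE Hl2) as Heval.
rewrite Cmod_R, Rabs_pos_eq in Heval by exact HV.
unfold H2norm2 at 2 in Hle. rewrite (is_series_unique _ _ Hnorm) in Hle. fold V in Hle.
assert (M * V <= K * V)
  by (apply Rmult_le_compat_r; [exact HV|unfold K; pose proof (Rle_abs M); lra]).
assert (/ K * H2norm2 beta g <= V).
{ replace V with (/ K * (K * V)) by (field; lra).
  apply Rmult_le_compat_l; [apply Rlt_le, Rinv_0_lt_compat, HK|lra]. }
replace (E / / K) with (E * K) in Heval by (field; lra).
lra.
Qed.

(* Arithmetic of the exponent: over a window of relative length 1/q <= a/2
   after N, the total decay of T_a(r)^(2j) is at most (1 - a/4) L. *)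
Lemma window_exponent (a L Nr Wr qr : R) : 0 < a < 1 -> 0 < Nr -> 0 <= L -> 0 <= Wr ->
  Wr * qr <= Nr -> 2 <= qr * a -> L / (2 * Nr) <= a / 4 ->
  2 * (Nr + Wr) * ((1 - a) * (L / (2 * Nr)) / (1 - (1 - a) * (L / (2 * Nr))))
  <= (1 - a / 4) * L.
Proof.
intros Ha HN HL HW HWq Hq Hs. set (s := L / (2 * Nr)) in *. set (u := (1 - a) * s).
assert (Hs0 : 0 <= s) by (unfold s; apply Rdiv_le_0_compat; lra).
assert (Hu : 0 <= u <= a / 4) by (unfold u; split; nra).
assert (HqPos : 0 < qr) by nra.
assert (HWN : Wr <= Nr * (a / 2)).
{ apply Rmult_le_reg_r with qr; [lra|]. nra. }
assert (H2Ns : 2 * Nr * s = L) by (unfold s; field; lra).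
assert (Hdecay : 2 * (Nr + Wr) * u <= (1 - a / 2) * L).
{ unfold u. rewrite <- H2Ns. assert (0 <= (1 - a) * s) by nra. nra. }
apply Rmult_le_reg_r with (1 - u); [lra|].
replace (2 * (Nr + Wr) * (u / (1 - u)) * (1 - u)) with (2 * (Nr + Wr) * u) by (field; lra).
assert (0 <= a * u) by nra. nra.
Qed.

(* On the plateau after N = (k+1)! the kernel sum gains N y^j per index, so a
   window of length W <= N contributes at least W N y^(N+W). *)
Lemma window_sum_lower (beta : nat -> R) (k W : nat) (y : R) : beta_spec beta ->
  (3 <= k)%nat -> (W <= fact (k + 1))%nat -> 0 <= y <= 1 ->
  INR W * INR (fact (k + 1)) * y ^ (fact (k + 1) + W)
  <= kernel_sum beta y (fact (k + 1) + W).
Proof.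
intros hbeta Hk HW Hy. set (N := fact (k + 1)).
assert (Hd : forall d, (d <= W)%nat -> INR d * INR N * y ^ (N + W) <= kernel_sum beta y (N + d)).
{ induction d as [|d IH]; intros HdW.
  - rewrite Rmult_0_l, Rmult_0_l. apply sum_n_nonneg. intros j.
    apply Rdiv_le_0_compat; [apply pow_le; lra|apply beta_pos, hbeta].
  - unfold kernel_sum; rewrite Nat.add_succ_r, sum_Sn, S_INR; fold (kernel_sum beta y (N + d)).
    change (plus ?u ?v) with (u + v).
    rewrite (beta_plateau beta hbeta k) by (unfold N; lia). fold N.
    assert (y ^ (N + W) <= y ^ S (N + d)) by (apply pow_antimono; [lra|lia]).
    specialize (IH ltac:(lia)).
    assert (HN : 0 < INR N) by apply INR_fact_pos.
    replace (y ^ S (N + d) / / INR N) with (INR N * y ^ S (N + d)) by (field; lra).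
    nra. }
apply Hd; lia.
Qed.

Lemma window_length (N q : nat) : (1 <= q)%nat -> (2 * q <= N)%nat ->
  INR (N / q) * INR q <= INR N /\ INR N / (2 * INR q) <= INR (N / q).
Proof.
intros Hq HN. assert (Hqr : 1 <= INR q) by (apply (le_INR 1); lia).
assert (Hlow : (q * (N / q) <= N)%nat) by apply Nat.Div0.mul_div_le.
assert (Hhigh : (N < q * S (N / q))%nat) by (apply Nat.mul_succ_div_gt; lia).
apply le_INR in Hlow. apply lt_INR in Hhigh.
rewrite mult_INR in Hlow, Hhigh. rewrite S_INR in Hhigh.
assert (H2q : 2 * INR q <= INR N) by (apply le_INR in HN; rewrite mult_INR in HN; exact HN).
split; [lra|].
apply Rmult_le_reg_r with (2 * INR q); [lra|].
unfold Rdiv; rewrite Rmult_assoc, Rinv_l, Rmult_1_r by lra. nra.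
Qed.

Section Scale.
Variable beta : nat -> R.
Hypothesis hbeta : beta_spec beta.
Variables (a : R) (q k : nat).
Hypothesis ha : 0 < a < 1.
Hypothesis hqa : 2 <= INR q * a.
Hypothesis hk8 : (8 <= k)%nat.
Hypothesis hkq : (2 * q <= k)%nat.

Let N := fact (k + 1).
Let Nr := INR N.
Let kr := INR k + 1.
Let L := ln kr.
Let s := L / (2 * Nr).
Let r := exp (- s).
Let W := (N / q)%nat.

Lemma q_ge1 : 1 <= INR q.
Proof.
assert (0 < INR q) by (pose proof (pos_INR q); nra).
apply (le_INR 1), INR_lt. simpl; lra.
Qed.

Lemma kr_ge9 : 9 <= kr.
Proof. unfold kr. apply (le_INR 8) in hk8. simpl in hk8. lra. Qed.

Lemma Nr_ge : kr * INR k <= Nr.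
Proof.
unfold Nr, N, kr. rewrite fact_succ_mult.
apply Rmult_le_compat_l; [pose proof (pos_INR k); lra|apply le_INR, le_fact].
Qed.

Lemma Nr_pos : 0 < Nr.
Proof. apply INR_fact_pos. Qed.

Lemma L_bounds : 2 <= L <= INR k.
Proof. exact (log_scale_bounds k hk8). Qed.

Lemma r_unit : 0 < r < 1.
Proof.
pose proof L_bounds. pose proof Nr_pos.
split; [apply exp_pos|]. rewrite <- exp_0. apply exp_increasing.
unfold s. assert (0 < L / (2 * Nr)) by (apply Rdiv_lt_0_compat; lra). lra.
Qed.

Lemma window_facts : INR W * INR q <= Nr /\ Nr / (2 * INR q) <= INR W /\ (W <= N)%nat.
Proof.
pose proof q_ge1.
assert (H2q : (2 * q <= N)%nat) by (pose proof (le_fact (k + 1)); unfold N; lia).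
destruct (window_length N q ltac:(apply INR_le; simpl; lra) H2q) as [HWq HWlow].
split; [exact HWq|split; [exact HWlow|]].
apply INR_le. pose proof (pos_INR W). fold W Nr in HWq |- *. nra.
Qed.

(* At x = r^2 = exp(-L/N) the kernel sums are O(N^2/(k+1)), where a weight
   comparable to 1/(j+1) would give order N^2/ln(k+1). *)
Lemma kernel_sum_upper (n : nat) : kernel_sum beta (r ^ 2) n <= 7 * Nr ^ 2 / kr.
Proof.
pose proof L_bounds. pose proof kr_ge9. pose proof Nr_ge. pose proof Nr_pos.
set (kf := INR (fact k)). set (x := exp (- (L / Nr))).
assert (HNk : Nr = kr * kf) by apply fact_succ_mult.
assert (Hx : 0 <= x < 1).
{ replace x with (r ^ 2) by (unfold r, x, s; rewrite exp_pow; f_equal; simpl; field; lra).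
  pose proof r_unit. split; [apply pow2_ge_0|nra]. }
replace (r ^ 2) with x by (unfold r, x, s; rewrite exp_pow; f_equal; simpl; field; lra).
destruct (exp_scale_gaps L Nr ltac:(nra)) as [Hx1 Hz1]; fold x in Hx1, Hz1.
assert (HxN1 : x ^ (N - 1) <= 3 / kr).
{ replace (3 / kr) with (3 * exp (- L))
    by (rewrite exp_Ropp; unfold L; rewrite exp_ln by lra; reflexivity).
  apply exp_scale_pow_pred; [apply lt_O_fact|]. fold Nr. split; nra. }
assert (HL0 : 0 < L / (4 * Nr)) by (apply Rdiv_lt_0_compat; lra).
eapply Rle_trans; [apply (kernel_sum_bound beta hbeta k ltac:(lia) x n Hx); fold N Nr; lra|].
fold N Nr kf.
assert (kf / (1 - x) <= kf * (2 * Nr / L)).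
{ apply Rmult_le_compat_l; [unfold kf; apply pos_INR|].
  replace (2 * Nr / L) with (/ (L / (2 * Nr))) by (field; lra).
  apply Rinv_le_contravar; [apply Rdiv_lt_0_compat; lra|exact Hx1]. }
assert (Nr * x ^ (N - 1) / (1 - x * (1 + / Nr)) <= Nr * (3 / kr) * (4 * Nr / L)).
{ apply Rmult_le_compat; [apply Rmult_le_pos; [lra|apply pow_le; lra]|
    apply Rlt_le, Rinv_0_lt_compat; lra|apply Rmult_le_compat_l; lra|].
  replace (4 * Nr / L) with (/ (L / (4 * Nr))) by (field; lra).
  apply Rinv_le_contravar; [exact HL0|exact Hz1]. }
assert (kf * (2 * Nr / L) + Nr * (3 / kr) * (4 * Nr / L) = 14 * Nr ^ 2 / (kr * L))
  by (rewrite HNk; field; lra).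
assert (14 * Nr ^ 2 / (kr * L) <= 7 * Nr ^ 2 / kr).
{ unfold Rdiv. rewrite Rinv_mult.
  assert (0 < Nr ^ 2 * / kr) by (apply Rmult_lt_0_compat; [nra|apply Rinv_0_lt_compat; lra]).
  assert (/ L <= / 2) by (apply Rinv_le_contravar; lra). nra. }
lra.
Qed.

Lemma mobius_window_decay : exp (a * L / 4) / kr <= (mobius a r ^ 2) ^ (N + W).
Proof.
pose proof L_bounds. pose proof kr_ge9. pose proof Nr_ge. pose proof Nr_pos. pose proof q_ge1.
destruct window_facts as [HWq _].
assert (Hs : s <= a / 4).
{ assert (2 <= kr * a).
  { apply le_INR in hkq. rewrite mult_INR in hkq. simpl in hkq. unfold kr. nra. }
  unfold s. apply Rmult_le_reg_r with (2 * Nr); [lra|].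
  unfold Rdiv; rewrite Rmult_assoc, Rinv_l by lra. nra. }
assert (Hs0 : 0 <= s) by (unfold s; apply Rdiv_le_0_compat; lra).
rewrite <- pow_mult.
eapply Rle_trans; [|apply mobius_pow_lower; [lra|exact Hs0|nra]].
replace (exp (a * L / 4) / kr) with (exp (- ((1 - a / 4) * L))) by
  (unfold Rdiv; rewrite <- (exp_ln kr), <- exp_Ropp, <- exp_plus by lra; f_equal; fold L; ring).
apply exp_mono, Ropp_le_contravar. rewrite mult_INR, plus_INR. fold Nr.
apply (window_exponent a L Nr (INR W) (INR q)); auto; [lra|apply pos_INR].
Qed.

Lemma kernel_sum_lower :
  Nr / (2 * INR q) * Nr * (exp (a * L / 4) / kr) <= kernel_sum beta (mobius a r ^ 2) (N + W).
Proof.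
pose proof kr_ge9. pose proof Nr_pos. pose proof q_ge1.
destruct window_facts as [_ [HWlow HWN]].
assert (Hrho : 0 <= mobius a r ^ 2 <= 1).
{ pose proof r_unit. pose proof (mobius_unit a r ltac:(lra) ltac:(lra)).
  split; [apply pow2_ge_0|nra]. }
eapply Rle_trans; [|apply (window_sum_lower beta k W _ hbeta ltac:(lia) HWN Hrho)]. fold N Nr.
assert (Hexp : 0 <= exp (a * L / 4) / kr)
  by (apply Rdiv_le_0_compat; [apply Rlt_le, exp_pos|lra]).
apply Rmult_le_compat; [|exact Hexp| |exact mobius_window_decay].
- apply Rmult_le_pos; [apply Rdiv_le_0_compat|]; lra.
- apply Rmult_le_compat_r; lra.
Qed.

Lemma growth_bound (K : R) : 0 < K -> kernel_domination beta a K ->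
  exp (a * L / 4) <= 14 * INR q * K.
Proof.
intros HK Hcmp. pose proof kr_ge9. pose proof Nr_pos. pose proof q_ge1.
assert (Hr : 0 <= r < 1) by (pose proof r_unit; lra).
pose proof (Rle_trans _ _ _ kernel_sum_lower (Hcmp r _ (N + W)%nat Hr kernel_sum_upper))
  as Hchain.
assert (Hfactor : 0 < Nr ^ 2 / kr) by (apply Rdiv_lt_0_compat; nra).
replace (Nr / (2 * INR q) * Nr * (exp (a * L / 4) / kr))
  with (Nr ^ 2 / kr * (exp (a * L / 4) / (2 * INR q))) in Hchain by (field; lra).
replace (K * (7 * Nr ^ 2 / kr)) with (Nr ^ 2 / kr * (7 * K)) in Hchain by (field; lra).
apply Rmult_le_reg_l in Hchain; [|exact Hfactor].
apply Rmult_le_reg_r with (/ (2 * INR q)); [apply Rinv_0_lt_compat; lra|].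
replace (14 * INR q * K * / (2 * INR q)) with (7 * K) by (field; lra). exact Hchain.
Qed.

End Scale.

Lemma exists_large_nat (B : R) (m : nat) : exists k, (m <= k)%nat /\ B < INR k.
Proof.
destruct (INR_unbounded B) as [n Hn]. exists (n + m)%nat. split; [lia|].
rewrite plus_INR. pose proof (pos_INR m). lra.
Qed.

Theorem mainTheorem14 (beta : nat -> R) (hbeta : beta_spec beta)
  (a : R) (ha : 0 < a < 1) :
  ~ bounded_comp_op beta (RtoC a).
Proof.
intros Hbounded.
destruct (kernel_comparison beta a (beta_pos beta hbeta) ltac:(lra) Hbounded)
  as [K [HK Hdom]].
(* Fix the relative window length 1/q <= a/2. *)
destruct (INR_unbounded (2 / a)) as [q Hq].
assert (Hqa : 2 <= INR q * a).
{ apply Rlt_le, Rmult_lt_reg_r with (/ a); [apply Rinv_0_lt_compat; lra|].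
  rewrite Rmult_assoc, Rinv_r, Rmult_1_r by lra. exact Hq. }
(* Choose k so large that (k+1)^(a/4) > 14 q K. *)
assert (HqK : 0 < 14 * INR q * K) by (pose proof (pos_INR q); nra).
destruct (exists_large_nat (exp (4 * ln (14 * INR q * K) / a)) (8 + 2 * q)) as [k [Hk Hbig]].
assert (HlnK : 4 * ln (14 * INR q * K) / a < ln (INR k + 1)).
{ rewrite <- (ln_exp (4 * ln (14 * INR q * K) / a)).
  apply ln_increasing; [apply exp_pos|lra]. }
assert (14 * INR q * K < exp (a * ln (INR k + 1) / 4)).
{ rewrite <- (exp_ln (14 * INR q * K)) at 1 by exact HqK. apply exp_increasing.
  apply Rmult_lt_reg_r with (4 / a); [apply Rdiv_lt_0_compat; lra|].
  replace (a * ln (INR k + 1) / 4 * (4 / a)) with (ln (INR k + 1)) by (field; lra).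
  replace (ln (14 * INR q * K) * (4 / a)) with (4 * ln (14 * INR q * K) / a) by (field; lra).
  exact HlnK. }
pose proof (growth_bound beta hbeta a q k ha Hqa ltac:(lia) ltac:(lia) K HK Hdom). lra.
Qed.
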